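(* Let $A\in\mathbb{R}^{n\times n}$ be a positive weighted circuit matrix with $k\ge 2$ weights $c_1,\dots,c_k>0$. Let $A'$ be obtained from $A$ by setting one or more, but not all, of the weights $c_j$ to $0$. Then $r(t):=r\big((1-t)A'+tA'^{\top}\big)$ is strictly concave in $t$ on $(0,1)$.
   Context: A weighted circuit matrix is an $n\times n$ matrix for which there exist $k\in\{1,\dots,n\}$ distinct indices $i_1,\dots,i_k\in\{1,\dots,n\}$ such that all entries are zero except weights $c_1,\dots,c_k$ at positions $(i_1,i_2),(i_2,i_3),\dots,(i_{k-1},i_k),(i_k,i_1)$. It is a positive weighted circuit matrix if all weights are positive. $r(M)$ denotes the spectral radius of $M$. *)

From HB Require Import structures.
From mathcomp Require Import all_boot all_order all_algebra.
From mathcomp Require Import classical_sets reals.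
From mathcomp.real_closed Require Import complex.
Set Implicit Arguments. Unset Strict Implicit. Unset Printing Implicit Defensive.
Import Order.TTheory GRing.Theory Num.Theory.
Local Open Scope ring_scope.
Local Open Scope classical_set_scope.

Definition eigenvalueC (R : realType) (n : nat) (M : 'M[R]_n) (z : R[i]) : bool :=
  root (char_poly (map_mx (real_complex R) M)) z.

Definition spectral_radius (R : realType) (n : nat) (M : 'M[R]_n) : R :=
  sup [set Normc.normc z | z in [set z | eigenvalueC M z]].

(* weighted circuit matrix on distinct indices idx 0, ..., idx (k-1) with
   weights c : entries c j at position (idx j, idx (j+1 mod k)) *)
Definition circuit_mx (R : realType) (n k : nat) (idx : 'I_k -> 'I_n)
  (c : 'I_k -> R) : 'M[R]_n :=
  \sum_(j < k) c j *: delta_mx (idx j) (idx (ordS j)).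

Definition strictly_concave_on_01 (R : realType) (f : R -> R) : Prop :=
  forall x y s : R, 0 < x < 1 -> 0 < y < 1 -> x != y -> 0 < s < 1 ->
    (1 - s) * f x + s * f y < f ((1 - s) * x + s * y).

(* Setting a weight of the circuit to zero leaves a union of paths, on which a
   positive diagonal D can be chosen so that conjugation by D multiplies every
   remaining edge of A' by lam and every edge of A'^T by 1/lam.  With
   lam = (1 - t) / sqrt (t (1 - t)) this gives
     (1 - t) A' + t A'^T = sqrt (t (1 - t)) * D^-1 (A' + A'^T) D,
   so r(t) = sqrt (t (1 - t)) * r(A' + A'^T).  The symmetric matrix A' + A'^T
   is nonzero, hence not nilpotent, so its spectral radius is positive, and
   t |-> sqrt (t (1 - t)) is strictly concave. *)

From HB Require Import structures.
From mathcomp Require Import all_boot all_order all_algebra.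
From mathcomp Require Import boolp classical_sets reals.
From mathcomp.real_closed Require Import complex.
From mathcomp Require Import ring lra zify.
Set Implicit Arguments. Unset Strict Implicit. Unset Printing Implicit Defensive.
Import Order.TTheory GRing.Theory Num.Theory.
Local Open Scope ring_scope.
Local Open Scope classical_set_scope.
Local Open Scope complex_scope.

Lemma eigenvalueZ (F : fieldType) n (A : 'M[F]_n) a w :
  a != 0 -> eigenvalue (a *: A) (a * w) = eigenvalue A w.
Proof.
move=> a0; apply/eigenvalueP/eigenvalueP => -[v Av nz]; exists v => //.
  by apply: (scalerI a0); rewrite scalemxAr Av scalerA.
by rewrite -scalemxAr Av scalerA.
Qed.

Lemma eigenvalue_conj (F : fieldType) n (A P Q : 'M[F]_n) :
  P *m Q = 1%:M -> eigenvalue (Q *m A *m P) =1 eigenvalue A.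
Proof.
move=> PQ w; have QP := mulmx1C PQ.
apply/eigenvalueP/eigenvalueP => -[v Av nz].
- exists (v *m Q); first by rewrite scalemxAl -Av !mulmxA -(mulmxA _ P Q) PQ mulmx1.
  by apply: contraNneq nz => vQ0; rewrite -[v]mulmx1 -QP mulmxA vQ0 mul0mx.
- exists (v *m P); first by rewrite !mulmxA -(mulmxA v P Q) PQ mulmx1 Av -scalemxAl.
  by apply: contraNneq nz => vP0; rewrite -[v]mulmx1 -PQ mulmxA vP0 mul0mx.
Qed.

Lemma normc_real (R : rcfType) (x : R) : Normc.normc x%:C = `|x|.
Proof. by rewrite /Normc.normc /= expr0n /= addr0 sqrtr_sqr. Qed.

Lemma normc_ge0 (R : rcfType) (z : R[i]) : 0 <= Normc.normc z.
Proof. by case: z => a b; rewrite /Normc.normc sqrtr_ge0. Qed.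

Lemma sup_scale (R : realType) (E : set R) (mu : R) :
  0 < mu -> has_ubound E -> sup [set mu * x | x in E] = mu * sup E.
Proof.
move=> mu0 ubE; have [->|/set0P[x0 Ex0]] := eqVneq E set0.
  by rewrite image_set0 sup0 mulr0.
have supE := ub_le_sup ubE.
have ubF : ubound [set mu * x | x in E] (mu * sup E).
  by move=> _ [x Ex <-]; rewrite ler_pM2l // supE.
apply/le_anti/andP; split; first by apply: ge_sup => //; exists (mu * x0), x0.
rewrite -ler_pdivlMl //; apply: ge_sup; first by exists x0.
move=> x Ex; rewrite ler_pdivlMl //; apply: (ub_le_sup (ex_intro _ _ ubF)).
by exists x.
Qed.

Lemma eigenvalueCE (R : realType) n (M : 'M[R]_n) z :
  eigenvalueC M z = eigenvalue (map_mx (real_complex R) M) z.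
Proof. by rewrite eigenvalue_root_char. Qed.

Lemma eigen_norms_ubound (R : realType) n (M : 'M[R]_n) :
  has_ubound [set Normc.normc z | z in [set z | eigenvalueC M z]].
Proof.
have [r charE] := closed_field_poly_normal (char_poly (map_mx (real_complex R) M)).
exists (\sum_(z <- r) Normc.normc z) => _ [z /= + <-].
rewrite /eigenvalueC charE (monicP (char_poly_monic _)) scale1r root_prod_XsubC.
move=> zr; rewrite (big_rem z zr) /= lerDl sumr_ge0 // => i _; exact: normc_ge0.
Qed.

Lemma spectral_radius_conj (R : realType) n (M P Q : 'M[R]_n) :
  P *m Q = 1%:M -> spectral_radius (Q *m M *m P) = spectral_radius M.
Proof.
move=> PQ; rewrite /spectral_radius.
suff -> : eigenvalueC (Q *m M *m P) = eigenvalueC M by [].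
apply: funext => z; rewrite !eigenvalueCE !map_mxM eigenvalue_conj //.
by rewrite -map_mxM PQ map_mx1.
Qed.

Lemma spectral_radiusZ (R : realType) n (M : 'M[R]_n) (mu : R) :
  0 < mu -> spectral_radius (mu *: M) = mu * spectral_radius M.
Proof.
move=> mu0; have muC0 : mu%:C != 0 by rewrite fmorph_eq0 gt_eqF.
rewrite /spectral_radius -(sup_scale mu0 (eigen_norms_ubound M)); f_equal.
have eigZ z : eigenvalueC (mu *: M) (mu%:C * z) = eigenvalueC M z.
  by rewrite !eigenvalueCE map_mxZ eigenvalueZ.
have normZ z : Normc.normc (mu%:C * z) = mu * Normc.normc z.
  by rewrite Normc.normcM normc_real gtr0_norm.
apply/seteqP; split => [_ [z ez <-] | _ [_ [w ew <-] <-]].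
- exists (Normc.normc (z / mu%:C)); last by rewrite -normZ mulrC divfK.
  by exists (z / mu%:C); rewrite //= -eigZ mulrC divfK.
- by exists (mu%:C * w); rewrite ?normZ //= eigZ.
Qed.

Lemma sym_sqr_eq0 (R : realDomainType) n (C : 'M[R]_n) :
  C^T = C -> C *m C = 0 -> C = 0.
Proof.
move=> CT CC; have Csym a b : C a b = C b a by rewrite -{1}CT mxE.
apply/matrixP => i j; rewrite mxE.
have : \sum_(l < n) C i l ^+ 2 = 0.
  have := congr1 (fun X : 'M[R]_n => X i i) CC; rewrite !mxE => CCii.
  rewrite -[RHS]CCii; apply: eq_bigr => l _.
  by rewrite expr2 (Csym l i).
move/eqP; rewrite psumr_eq0 => [|l _]; last exact: sqr_ge0.
by move=> /allP/(_ j (mem_index_enum _)); rewrite sqrf_eq0 => /eqP.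
Qed.

Lemma sym_nilpotent_eq0 (R : realDomainType) n (B : 'M[R]_n.+1) m :
  B^T = B -> B ^+ m = 0 -> B = 0.
Proof.
move=> BT Bm0.
have BXT j : (B ^+ j)^T = B ^+ j.
  by elim: j => [|j IH]; rewrite ?trmx1 // {1}exprS exprSr -!mulmxE trmx_mul IH BT.
suff B2X0 j : B ^+ (2 ^ j) = 0 -> B = 0.
  by apply: (B2X0 m); rewrite -(subnKC (ltnW (ltn_expl m (ltnSn 1)))) exprD Bm0 mul0r.
elim: j => [|j IH] Bj0; first by rewrite -[B]expr1.
by apply/IH/sym_sqr_eq0; rewrite ?BXT // mulmxE -exprD addnn -mul2n -expnS.
Qed.

Lemma sym_eigenvalueC_neq0 (R : realType) n (B : 'M[R]_n.+1) :
  B^T = B -> B != 0 -> exists2 z, eigenvalueC B z & z != 0.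
Proof.
move=> BT; apply: contraNP => noz; apply/eqP.
set BC := map_mx (real_complex R) B.
have [r charE] := closed_field_poly_normal (char_poly BC).
rewrite (monicP (char_poly_monic _)) scale1r in charE.
have /all_pred1P r0 : all (pred1 0) r.
  apply/allP => z zr; apply/negPn/negP => nz; apply: noz; exists z => //.
  by rewrite /eigenvalueC -/BC charE root_prod_XsubC.
have charXn : char_poly BC = 'X ^+ size r.
  by rewrite charE {1}r0 big_nseq subr0 iter_mulr_1.
have := Cayley_Hamilton BC; rewrite charXn rmorphXn /= horner_mx_X -rmorphXn.
by move/eqP; rewrite map_mx_eq0 => /eqP; apply: sym_nilpotent_eq0.
Qed.

Lemma spectral_radius_sym_gt0 (R : realType) n (B : 'M[R]_n.+1) :
  B^T = B -> B != 0 -> 0 < spectral_radius B.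
Proof.
move=> BT /(sym_eigenvalueC_neq0 BT) [z ez nz].
apply: (@lt_le_trans _ _ (Normc.normc z)); last first.
  by apply: (ub_le_sup (eigen_norms_ubound B)); exists z.
by rewrite lt_def normc_ge0 andbT; apply: contra nz => /eqP/Normc.eq0_normc->.
Qed.

Lemma circuit_mxE (R : realType) n k (idx : 'I_k -> 'I_n) (c : 'I_k -> R) p q :
  circuit_mx idx c p q =
  \sum_l c l * ((p == idx l) && (q == idx (ordS l)))%:R.
Proof. by rewrite /circuit_mx summxE; apply: eq_bigr => l _; rewrite !mxE. Qed.

Lemma circuit_mx_ge0 (R : realType) n k (idx : 'I_k -> 'I_n) (c : 'I_k -> R) p q :
  (forall l, 0 <= c l) -> 0 <= circuit_mx idx c p q.
Proof. by move=> c0; rewrite circuit_mxE sumr_ge0 // => l _; rewrite mulr_ge0. Qed.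

Lemma circuit_mx_idx (R : realType) n k (idx : 'I_k -> 'I_n) (c : 'I_k -> R) l :
  injective idx -> circuit_mx idx c (idx l) (idx (ordS l)) = c l.
Proof.
move=> inj; rewrite circuit_mxE (bigD1 l) //= !eqxx mulr1 big1 ?addr0 // => j jl.
by rewrite (inj_eq inj) eq_sym (negbTE jl) mulr0.
Qed.

Lemma mul_diag_delta_mx (R : comNzRingType) n (e f : 'I_n -> R) i j :
  diag_mx (\row_p e p) *m delta_mx i j *m diag_mx (\row_p f p) =
  (e i * f j) *: delta_mx i j.
Proof.
apply/matrixP => p q; rewrite mul_mx_diag mul_diag_mx !mxE.
by case: eqP => [->|_]; case: eqP => [->|_]; rewrite ?mulr1 ?mulr0 ?mul0r // mulrC.
Qed.

Lemma circuit_mx_diag_scale (R : realType) n k (idx : 'I_k -> 'I_n)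
    (c : 'I_k -> R) (e f : 'I_n -> R) (lam : R) :
  (forall l, c l != 0 -> e (idx l) * f (idx (ordS l)) = lam) ->
  diag_mx (\row_p e p) *m circuit_mx idx c *m diag_mx (\row_p f p) =
  lam *: circuit_mx idx c.
Proof.
move=> efE; rewrite /circuit_mx mulmx_sumr mulmx_suml scaler_sumr.
apply: eq_bigr => l _; rewrite -scalemxAr -scalemxAl mul_diag_delta_mx.
by have [->|/efE->] := eqVneq (c l) 0; rewrite ?scale0r ?scaler0 // !scalerA mulrC.
Qed.

Lemma tr_circuit_mx_diag_scale (R : realType) n k (idx : 'I_k -> 'I_n)
    (c : 'I_k -> R) (e f : 'I_n -> R) (lam : R) :
  (forall l, c l != 0 -> f (idx l) * e (idx (ordS l)) = lam) ->
  diag_mx (\row_p e p) *m (circuit_mx idx c)^T *m diag_mx (\row_p f p) =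
  lam *: (circuit_mx idx c)^T.
Proof.
move=> feE; apply: trmx_inj.
rewrite !trmx_mul !tr_diag_mx trmxK mulmxA (circuit_mx_diag_scale feE).
by rewrite linearZ /= trmxK.
Qed.

(* [ordS_steps s l] is [(l - s - 1) mod k], the number of [ordS]-steps
   from [ordS s] to [l]. *)
Definition ordS_steps k (s l : 'I_k) : nat :=
  if (s < l)%N then (l - s.+1)%N else (l + k - s.+1)%N.

Lemma ordS_stepsS k (s l : 'I_k) :
  l != s -> ordS_steps s (ordS l) = (ordS_steps s l).+1.
Proof.
move=> /eqP ls; have {}ls : (l : nat) <> s by move/val_inj.
have := ltn_ord l; have := ltn_ord s; rewrite /ordS_steps /= => sk lk.
case: (ltnP l.+1 k) => lSk.
  by rewrite modn_small //; case: (ltnP s l); case: (ltnP s l.+1) => *; lia.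
have -> : l.+1 = k by lia.
by rewrite modnn ltn0; case: (ltnP s l) => *; lia.
Qed.

Lemma cut_circuit_scaling (R : numDomainType) n k (idx : 'I_k -> 'I_n)
    (c : 'I_k -> R) (s : 'I_k) (lam : R) :
  injective idx -> c s = 0 -> 0 < lam ->
  exists2 d : 'I_n -> R, forall p, 0 < d p &
    forall l, c l != 0 -> d (idx (ordS l)) = lam * d (idx l).
Proof.
move=> inj cs0 lam0.
pose d p := if [pick l | idx l == p] is Some l then lam ^+ ordS_steps s l else 1.
have dE l : d (idx l) = lam ^+ ordS_steps s l.
  by rewrite /d; case: pickP => [l' /eqP/inj -> // | /(_ l)]; rewrite eqxx.
exists d => [p | l cl]; first by rewrite /d; case: pickP => *; rewrite ?exprn_gt0.
by rewrite !dE ordS_stepsS ?exprS //; apply: contra_neq cl => ->.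
Qed.

Lemma spectral_radius_cut_circuit (R : realType) n k (idx : 'I_k -> 'I_n)
    (c : 'I_k -> R) (s : 'I_k) (t : R) :
  injective idx -> c s = 0 -> 0 < t < 1 ->
  let A := circuit_mx idx c in
  spectral_radius ((1 - t) *: A + t *: A^T) =
  Num.sqrt (t * (1 - t)) * spectral_radius (A + A^T).
Proof.
move=> inj cs0 /andP[t0 t1] A; set mu := Num.sqrt _.
have t1' : 0 < 1 - t by rewrite subr_gt0.
have mu0 : 0 < mu by rewrite sqrtr_gt0 mulr_gt0.
have [d d0 dS] := cut_circuit_scaling (lam := (1 - t) / mu) inj cs0 (divr_gt0 t1' mu0).
have dd1 : diag_mx (\row_p d p) *m diag_mx (\row_p (d p)^-1) = 1%:M.
  apply/matrixP => p q; rewrite mul_diag_mx !mxE.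
  by case: eqVneq => [->|_]; rewrite ?mulr1n ?mulfV ?gt_eqF ?mulr0n ?mulr0.
suff -> : (1 - t) *: A + t *: A^T =
    mu *: (diag_mx (\row_p (d p)^-1) *m (A + A^T) *m diag_mx (\row_p d p)).
  by rewrite (spectral_radiusZ _ mu0) (spectral_radius_conj _ dd1).
rewrite mulmxDr mulmxDl.
rewrite (circuit_mx_diag_scale (lam := (1 - t) / mu)); last first.
  by move=> l /dS->; rewrite mulrCA mulVf ?mulr1 ?gt_eqF.
rewrite (tr_circuit_mx_diag_scale (lam := mu / (1 - t))); last first.
  by move=> l /dS->; rewrite invfM mulrCA mulfV ?gt_eqF // mulr1 invf_div.
rewrite scalerDr !scalerA mulrCA mulfV ?gt_eqF // mulr1 mulrA -expr2.
by rewrite sqr_sqrtr ?mulr_ge0 ?ltW // mulfK ?gt_eqF.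
Qed.

Lemma strictly_concave_sqrt_t1t (R : realType) :
  strictly_concave_on_01 (fun t : R => Num.sqrt (t * (1 - t))).
Proof.
move=> x y s /andP[x0 x1] /andP[y0 y1] xy /andP[s0 s1].
set z := (1 - s) * x + s * y.
have hx : 0 <= x * (1 - x) by apply: mulr_ge0; lra.
have hy : 0 <= y * (1 - y) by apply: mulr_ge0; lra.
have hz : 0 <= z * (1 - z) by apply: mulr_ge0; rewrite /z; nra.
move: (sqr_sqrtr hx) (sqr_sqrtr hy) (sqr_sqrtr hz).
move: (sqrtr_ge0 (x * (1 - x))) (sqrtr_ge0 (y * (1 - y))) (sqrtr_ge0 (z * (1 - z))).
set u := Num.sqrt _; set v := Num.sqrt _; set w := Num.sqrt _.
move=> u0 v0 w0 uE vE wE.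
have dxy : 0 < (x - y) ^+ 2 by rewrite lt_def sqr_ge0 andbT sqrf_eq0 subr_eq0.
have combE : ((1 - s) * u + s * v) ^+ 2 =
    (1 - s) * u ^+ 2 + s * v ^+ 2 - s * (1 - s) * (u - v) ^+ 2 by ring.
have zE : z * (1 - z) =
    (1 - s) * (x * (1 - x)) + s * (y * (1 - y)) + s * (1 - s) * (x - y) ^+ 2.
  by rewrite /z; ring.
have : ((1 - s) * u + s * v) ^+ 2 < w ^+ 2.
  have uv2 : 0 <= s * (1 - s) * (u - v) ^+ 2 by rewrite mulr_ge0 ?sqr_ge0 //; nra.
  have xy2 : 0 < s * (1 - s) * (x - y) ^+ 2 by rewrite mulr_gt0 //; nra.
  rewrite combE wE zE uE vE; lra.
by rewrite ltr_pXn2r // nnegrE; nra.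
Qed.

Lemma strictly_concave_on_01_mulr (R : realType) (f : R -> R) (a : R) :
  0 < a -> strictly_concave_on_01 f -> strictly_concave_on_01 (fun t => f t * a).
Proof.
move=> a0 fcc x y s x01 y01 xy s01.
by rewrite !mulrA -mulrDl ltr_pM2r // fcc.
Qed.

Lemma eq_strictly_concave_on_01 (R : realType) (f g : R -> R) :
  (forall t, 0 < t < 1 -> f t = g t) ->
  strictly_concave_on_01 f -> strictly_concave_on_01 g.
Proof.
move=> fg fcc x y s x01 y01 xy s01.
have z01 : 0 < (1 - s) * x + s * y < 1.
  by move: x01 y01 s01 => /andP[? ?] /andP[? ?] /andP[? ?]; apply/andP; split; nra.
by rewrite -!fg //; apply: fcc.
Qed.

Theorem corollary2 (R : realType) (n k : nat) (idx : 'I_k -> 'I_n)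
  (c : 'I_k -> R) (S : {set 'I_k}) :
  (2 <= k)%N -> injective idx -> (forall j, 0 < c j) ->
  (0 < #|S| < k)%N ->
  let A' := circuit_mx idx (fun j => if j \in S then 0 else c j) in
  strictly_concave_on_01
    (fun t : R => spectral_radius ((1 - t) *: A' + t *: A'^T)).
Proof.
move=> k2 inj c0 /andP[S0 Sk].
case: n idx inj => [|n] idx inj; first by case: (idx (Ordinal (ltnW k2))).
set c' := fun j => if j \in S then 0 else c j => A'.
have /card_gt0P[s sS] := S0.
have /card_gt0P[j] : (0 < #|~: S|)%N by rewrite -(ltn_add2l #|S|) addn0 cardsC card_ord.
rewrite inE => jS.
have c's0 : c' s = 0 by rewrite /c' sS.
have c'0 l : 0 <= c' l by rewrite /c'; case: ifP => // _; apply: ltW.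
set B := A' + A'^T.
have BT : B^T = B by rewrite /B linearD /= trmxK addrC.
have B0 : B != 0.
  apply/eqP => /matrixP/(_ (idx j) (idx (ordS j))) /eqP.
  rewrite !mxE circuit_mx_idx // /c' (negbTE jS) paddr_eq0 ?circuit_mx_ge0 ?ltW //.
  by rewrite gt_eqF.
have rho0 := spectral_radius_sym_gt0 BT B0.
apply: (eq_strictly_concave_on_01
          (f := fun t => Num.sqrt (t * (1 - t)) * spectral_radius B)).
  by move=> t t01; rewrite (spectral_radius_cut_circuit inj c's0 t01).
exact: (strictly_concave_on_01_mulr rho0 (@strictly_concave_sqrt_t1t R)).
Qed.
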